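(* Let $a_1,\ldots,a_n$ be relatively prime positive integers, let $\mathcal{S}=\langle a_1,\ldots,a_n\rangle$, and let $e$ be a positive integer with $\gcd(e,a_1)=1$. Put $\mathcal{S}^e=\langle a_1,ea_2,\ldots,ea_n\rangle$. Then $\mathrm{type}(\mathcal{S})=\mathrm{type}(\mathcal{S}^e)$.
   Context: For positive integers $b_1,\ldots,b_t$ with $\gcd(b_1,\ldots,b_t)=1$, $\langle b_1,\ldots,b_t\rangle$ denotes the numerical semigroup of all non-negative integer linear combinations of $b_1,\ldots,b_t$. For a numerical semigroup $\mathcal{S}$, a pseudo-Frobenius number is an integer $x\notin\mathcal{S}$ such that $x+s\in\mathcal{S}$ for all $s\in\mathcal{S}$ with $s>0$ (equivalently, for all nonzero $s \in \mathcal{S}$); the type $\mathrm{type}(\mathcal{S})$ is the number of pseudo-Frobenius numbers of $\mathcal{S}$. *)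

From mathcomp Require Import all_boot all_order all_algebra.
Set Implicit Arguments. Unset Strict Implicit. Unset Printing Implicit Defensive.
Import Order.TTheory GRing.Theory Num.Theory.

Definition in_sg (b : seq nat) (x : int) : Prop :=
  exists c : seq nat, size c = size b /\
    x = Posz (\sum_(i < size b) nth 0 c i * nth 0 b i)%N.

Definition pseudo_frobenius (b : seq nat) (x : int) : Prop :=
  ~ in_sg b x /\ forall s : int, in_sg b s -> (0 < s)%R -> in_sg b (x + s)%R.

Definition sg_type_is (b : seq nat) (k : nat) : Prop :=
  exists l : seq int, uniq l /\ (forall x, x \in l <-> pseudo_frobenius b x)
                      /\ size l = k.

From mathcomp Require Import all_boot all_order all_algebra.
From mathcomp Require Import zify.
From Stdlib Require Import Classical.
Import Order.TTheory GRing.Theory Num.Theory.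

Set Implicit Arguments.
Unset Strict Implicit.
Unset Printing Implicit Defensive.

(* Write S = <a, b> and S^e = <a, e b>.  If x is in PF(S) then x + a is in S but
   x is not, so x + a is an element t of the monoid <b>; likewise y + a = e t with
   t in <b> for every y in PF(S^e).  Hence x |-> e (x + a) - a is a bijection from
   PF(S) onto PF(S^e).  Coprimality of e and a is what lets a representation
   c.+1 a + e u of e t be pulled back to one of t: e must divide c.+1.
   PF(S) is finite since x is determined by the residue of x + a modulo a. *)

Definition in_monoid (b : seq nat) (t : nat) : Prop :=
  exists c : seq nat, size c = size b /\
    t = (\sum_(i < size b) nth 0 c i * nth 0 b i)%N.

Lemma in_monoid0 b : in_monoid b 0.
Proof.
exists (nseq (size b) 0); rewrite size_nseq; split => //.
by rewrite big1 // => i _; rewrite nth_nseq; case: ifP.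
Qed.

Lemma in_monoidD b t u : in_monoid b t -> in_monoid b u -> in_monoid b (t + u).
Proof.
move=> [c [Hc ->]] [d [Hd ->]].
exists (mkseq (fun i => nth 0 c i + nth 0 d i) (size b)); rewrite size_mkseq.
split => //; rewrite -big_split /=; apply: eq_bigr => i _.
by rewrite nth_mkseq // mulnDl.
Qed.

Lemma in_monoid_scale e b u :
  in_monoid (map (fun x => e * x) b) u <-> exists t, in_monoid b t /\ u = e * t.
Proof.
have sum_scale c :
    (\sum_(i < size (map (fun x => e * x) b)) nth 0 c i * nth 0 (map (fun x => e * x) b) i
     = e * \sum_(i < size b) nth 0 c i * nth 0 b i)%N.
  rewrite big_distrr /=; move: (size_map (fun x => e * x) b) => Hs.
  rewrite (big_ord_widen_cond (size b) xpredT
    (fun i => nth 0 c i * nth 0 (map (fun x => e * x) b) i)) ?Hs //.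
  rewrite (big_ord_widen_cond (size b) xpredT (fun i => e * (nth 0 c i * nth 0 b i))) //.
  by apply: eq_bigr => i /andP [Hi _]; rewrite (nth_map 0) // mulnCA.
split.
- move=> [c [Hs ->]]; exists (\sum_(i < size b) nth 0 c i * nth 0 b i)%N.
  by split; [exists c; rewrite Hs size_map | exact: sum_scale].
- move=> [t [[c [Hs ->]] ->]]; exists c.
  by rewrite sum_scale size_map.
Qed.

Lemma in_sg_cons a b x :
  in_sg (a :: b) x <-> exists c t, in_monoid b t /\ x = Posz (c * a + t).
Proof.
split.
- move=> [[|c0 c] [//= [Hs] ->]].
  exists c0, (\sum_(i < size b) nth 0 c i * nth 0 b i)%N.
  by split; [exists c | rewrite big_ord_recl].
- move=> [c0 [t [[c [Hs ->]] ->]]]; exists (c0 :: c).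
  by rewrite /= Hs big_ord_recl.
Qed.

Lemma coprime_cancel e a n m k : 0 < e -> coprime e a ->
  e * n = m.+1 * a + e * k -> exists q, n = q.+1 * a + k.
Proof.
move=> e_gt0 co_ea Heq.
have /dvdnP [[|q] Hq] : e %| m.+1.
  rewrite -(Gauss_dvdl _ co_ea); apply/dvdnP; exists (n - k); rewrite mulnBl; lia.
- by [].
- exists q; apply/eqP; rewrite -(eqn_pmul2l e_gt0); apply/eqP; rewrite Heq Hq; nia.
Qed.

Definition enumerates {T : eqType} (P : T -> Prop) (l : seq T) : Prop :=
  uniq l /\ forall x, x \in l <-> P x.

Lemma enumerates_size (T : eqType) (P : T -> Prop) l1 l2 :
  enumerates P l1 -> enumerates P l2 -> size l1 = size l2.
Proof.
move=> [U1 H1] [U2 H2]; apply: perm_size; apply: uniq_perm => // x.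
by apply/idP/idP => [/H1 /H2 | /H2 /H1].
Qed.

Lemma enumerates_map (T U : eqType) (P : T -> Prop) (Q : U -> Prop) (f : T -> U) l :
  injective f -> (forall x, P x -> Q (f x)) ->
  (forall y, Q y -> exists2 x, P x & y = f x) ->
  enumerates P l -> enumerates Q (map f l).
Proof.
move=> f_inj PQ QP [Ul Hl]; split; first by rewrite map_inj_uniq.
move=> y; split => [/mapP [x /Hl Px ->] | /QP [x /Hl lx ->]]; last exact: map_f.
exact: PQ.
Qed.

Lemma enumerates_bounded_inj (T : eqType) (P : T -> Prop) (g : T -> nat) (n : nat) :
  (forall x y, P x -> P y -> g x = g y -> x = y) -> (forall x, P x -> g x < n) ->
  exists l, enumerates P l.
Proof.
move=> g_inj g_lt.
suff /(_ n) [l [Ul Hl]] :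
    forall m, exists l, enumerates (fun x => P x /\ g x < m) l.
  by exists l; split => // x; rewrite Hl; split => [[] // | Px]; split => //; apply: g_lt.
elim=> [|m [l [Ul Hl]]]; first by exists [::]; split => // x; split => // [[]].
case: (classic (exists2 x, P x & g x = m)) => [[x0 Px0 gx0] | no_m].
- exists (x0 :: l); split.
    by rewrite /= Ul andbT; apply/negP => /Hl []; lia.
  move=> x; rewrite in_cons; split.
    by case/orP => [/eqP -> | /Hl [Px gx]]; split => //; lia.
  move=> [Px gx]; case: (ltnP (g x) m) => gxm; first by apply/orP; right; apply/Hl.
  by apply/orP; left; apply/eqP; apply: g_inj => //; lia.
- exists l; split => // x; rewrite Hl.
  split => [[Px gx] | [Px gx]]; split => //; first lia.
  by case: (ltnP (g x) m) => // gxm; case: no_m; exists x => //; lia.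
Qed.

Lemma sg_type_isE b k :
  sg_type_is b k <-> exists2 l, enumerates (pseudo_frobenius b) l & size l = k.
Proof. by split => [[l [Ul [Hl <-]]] | [l [Ul Hl] <-]]; exists l. Qed.

Lemma pseudo_frobenius_addl a b x : 0 < a -> pseudo_frobenius (a :: b) x ->
  exists2 t, in_monoid b t & (x + Posz a)%R = Posz t.
Proof.
move=> a_gt0 [notS addS].
have /in_sg_cons [[|c] [t [bt Hxa]]] : in_sg (a :: b) (x + Posz a)%R.
  apply: addS; last by rewrite ltz_nat.
  by apply/in_sg_cons; exists 1, 0; rewrite mul1n addn0; split; first exact: in_monoid0.
- by exists t; rewrite // Hxa.
- by case: notS; apply/in_sg_cons; exists c, t; split => //; lia.
Qed.

Lemma pseudo_frobenius_finite a b : 0 < a ->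
  exists l, enumerates (pseudo_frobenius (a :: b)) l.
Proof.
move=> a_gt0.
apply: (@enumerates_bounded_inj _ _ (fun x => absz (x + Posz a)%R %% a) a); last first.
  by move=> x _; rewrite ltn_mod.
suff le_inj x y : pseudo_frobenius (a :: b) x -> pseudo_frobenius (a :: b) y ->
    absz (x + Posz a)%R %% a = absz (y + Posz a)%R %% a -> (x <= y)%R -> x = y.
  move=> x y Px Py Hxy; case: (lerP x y) => [|/ltW] ?; first exact: le_inj.
  by symmetry; apply: le_inj.
move=> Px Py; have [notSy _] := Py; move: Px Py.
move=> /(pseudo_frobenius_addl a_gt0) [t bt Hx] /(pseudo_frobenius_addl a_gt0) [u bu Hy].
rewrite Hx Hy /= => Hmod Hle.
have /dvdnP [[|k] Hk] : a %| u - t by rewrite -eqn_mod_dvd ?Hmod //; lia.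
- lia.
- by case: notSy; apply/in_sg_cons; exists k, t; split => //; lia.
Qed.

Section Dilation.
Variables (a e : nat) (b : seq nat).
Hypotheses (a_gt0 : 0 < a) (e_gt0 : 0 < e) (coprime_ea : coprime e a).

Let S := in_sg (a :: b).
Let Se := in_sg (a :: map (fun x => e * x) b).

Lemma in_sg_dilate x :
  Se x <-> exists c t, in_monoid b t /\ x = Posz (c * a + e * t).
Proof.
rewrite /Se in_sg_cons; split.
- by move=> [c [_ [/in_monoid_scale [t [bt ->]] ->]]]; exists c, t.
- move=> [c [t [bt ->]]]; exists c, (e * t); split => //.
  by apply/in_monoid_scale; exists t.
Qed.

Definition dilate_pf (x : int) : int := (Posz e * (x + Posz a) - Posz a)%R.

Lemma dilate_pf_inj : injective dilate_pf.
Proof.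
have e_neq0 : Posz e != 0%R by rewrite eqz_nat -lt0n.
by move=> x y /addIr /(mulfI e_neq0) /addIr.
Qed.

Lemma pseudo_frobenius_dilate x :
  pseudo_frobenius (a :: b) x ->
  pseudo_frobenius (a :: map (fun x => e * x) b) (dilate_pf x).
Proof.
move=> Px; have [/= notS addS] := Px; rewrite -/S -/Se in notS addS *.
have [t bt Hxa] := pseudo_frobenius_addl a_gt0 Px.
split.
- move=> /in_sg_dilate [c [u [bu Heq]]].
  have [|q Hq] := @coprime_cancel e a t c u e_gt0 coprime_ea.
    by rewrite /dilate_pf in Heq; lia.
  by case: notS; apply/in_sg_cons; exists q, u; split => //; lia.
- move=> s /in_sg_dilate [[|c] [u [bu ->]]] s_gt0; apply/in_sg_dilate.
  + have /in_sg_cons [d [v [bv Hxu]]] : S (x + Posz u)%R.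
      by apply: addS; [apply/in_sg_cons; exists 0, u | lia].
    by exists (e * d + e - 1), v; split => //; rewrite /dilate_pf; nia.
  + exists c, (t + u); split; first exact: in_monoidD.
    by rewrite /dilate_pf; nia.
Qed.

Lemma pseudo_frobenius_dilateV y :
  pseudo_frobenius (a :: map (fun x => e * x) b) y ->
  exists2 x, pseudo_frobenius (a :: b) x & y = dilate_pf x.
Proof.
move=> Py; have [/= notSe addSe] := Py; rewrite -/S -/Se in notSe addSe *.
have [t' /in_monoid_scale [t [bt ->]] Hya] := pseudo_frobenius_addl a_gt0 Py.
exists (Posz t - Posz a)%R; last by rewrite /dilate_pf; lia.
split.
- move=> /in_sg_cons [d [u [bu Heq]]]; case: notSe; apply/in_sg_dilate.
  by exists (e * d + e - 1), u; split => //; nia.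
- move=> s /in_sg_cons [[|d] [u [bu ->]]] s_gt0; apply/in_sg_cons.
  + have /in_sg_dilate [c [v [bv Hyu]]] : Se (y + Posz (e * u))%R.
      by apply: addSe; [apply/in_sg_dilate; exists 0, u | nia].
    have [|q Hq] := @coprime_cancel e a (t + u) c v e_gt0 coprime_ea; first by nia.
    by exists q, v; split => //; lia.
  + by exists d, (t + u); split; [exact: in_monoidD | lia].
Qed.

End Dilation.

Theorem proposition1 (a1 : nat) (as_ : seq nat) (e : nat) :
  0 < a1 -> all (fun x => 0 < x) as_ ->
  foldr gcdn 0 (a1 :: as_) = 1 ->
  0 < e -> coprime e a1 ->
  (exists k, sg_type_is (a1 :: as_) k) /\
  (forall k : nat, sg_type_is (a1 :: as_) k <->
                   sg_type_is (a1 :: map (fun x => e * x) as_) k).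
Proof.
move=> a1_gt0 _ _ e_gt0 coprime_ea.
have [l PFl] := pseudo_frobenius_finite as_ a1_gt0.
have PFel := enumerates_map (dilate_pf_inj e_gt0)
  (pseudo_frobenius_dilate a1_gt0 e_gt0 coprime_ea)
  (@pseudo_frobenius_dilateV _ _ as_ a1_gt0 e_gt0 coprime_ea) PFl.
split; first by exists (size l); apply/sg_type_isE; exists l.
move=> k; rewrite !sg_type_isE; split => -[l' PFl' <-].
- by exists (map (dilate_pf a1 e) l); rewrite // size_map (enumerates_size PFl PFl').
- by exists l; rewrite // -(enumerates_size PFel PFl') size_map.
Qed.
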